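(* Let $R$ be a ring with $1$ and let $\lambda$ be a lattice identity. Then $\lambda$ holds in the submodule lattice $\mathrm{Sub}\,M$ for every unital left $R$-module $M$ if and only if the dual of $\lambda$ holds in $\mathrm{Sub}\,M$ for every unital left $R$-module $M$.
   Context: $\mathrm{Sub}\,M$ is the lattice of submodules of $M$ with $X\wedge Y=X\cap Y$ and $X\vee Y=X+Y$. A lattice term is built from variables using $\vee$ and $\wedge$; a lattice identity is $p=q$ (universally quantified) for lattice terms $p,q$. The dual of a term is obtained by interchanging $\vee$ and $\wedge$; the dual of an identity is obtained by dualizing both sides. *)

From HB Require Import structures.
From mathcomp Require Import all_boot all_algebra.
Set Implicit Arguments. Unset Strict Implicit. Unset Printing Implicit Defensive.
Import GRing.Theory.
Local Open Scope ring_scope.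

Inductive lterm : Type :=
  | LVar of nat
  | LJoin of lterm & lterm
  | LMeet of lterm & lterm.

Fixpoint ldual (t : lterm) : lterm :=
  match t with
  | LVar i => LVar i
  | LJoin p q => LMeet (ldual p) (ldual q)
  | LMeet p q => LJoin (ldual p) (ldual q)
  end.

Definition lidentity := (lterm * lterm)%type.
Definition lidentity_dual (l : lidentity) : lidentity := (ldual l.1, ldual l.2).

Definition is_submodule (R : pzRingType) (M : lmodType R) (S : M -> Prop) : Prop :=
  [/\ S 0,
      (forall x y, S x -> S y -> S (x + y)) &
      (forall (a : R) x, S x -> S (a *: x))].

Fixpoint sub_eval (R : pzRingType) (M : lmodType R) (e : nat -> M -> Prop)
    (t : lterm) : M -> Prop :=
  match t with
  | LVar i => e i
  | LJoin p q => fun x => exists y z, [/\ sub_eval e p y, sub_eval e q z & x = y + z]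
  | LMeet p q => fun x => sub_eval e p x /\ sub_eval e q x
  end.

Definition holds_in_Sub (R : pzRingType) (M : lmodType R) (l : lidentity) : Prop :=
  forall e : nat -> M -> Prop, (forall i, is_submodule (e i)) ->
    forall x : M, sub_eval e l.1 x <-> sub_eval e l.2 x.

From HB Require Import structures.
From mathcomp Require Import all_boot all_algebra.
From mathcomp Require Import ring lra zify.
From mathcomp Require Import boolp classical_sets functions.

(* Since the dual of the dual is the identity, it suffices to show that an
   inclusion p <= q valid in every Sub M yields q* <= p* in every Sub M.
   Characters M -> Q/Z separate points from subgroups, and the annihilator of
   t*(e) is t evaluated at the annihilators of the e i: meets and sums trade
   places, and for a sum of annihilators one extends a character from X + Y,
   which works because Q/Z is divisible (Baer, via Zorn).  So it is enough that
   p <= q also holds among annihilators.  The character group is a right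
   R-module, not a left one, so this is transferred from a free left module:
   R^(leaves of p) with submodules placing a generic vector in p, such that
   every element of p evaluated at annihilators is the image of the generic
   vector under an additive map respecting these submodules. *)

Set Implicit Arguments. Unset Strict Implicit. Unset Printing Implicit Defensive.
Import GRing.Theory Num.Theory.
Local Open Scope ring_scope.
Local Open Scope classical_set_scope.

Definition divisible (D : zmodType) :=
  forall (d : D) (n : nat), (0 < n)%N -> exists c, c *+ n = d.

(* With divisibility, this makes [D] an injective cogenerator of abelian groups. *)
Definition cogenerating (D : zmodType) :=
  forall n : nat, n != 1%N -> exists2 c : D, c != 0 & c *+ n = 0.

Definition frac (x : rat) : rat := x - (Num.floor x)%:~R.

Lemma frac_bounds (x : rat) : 0 <= frac x < 1.
Proof.
rewrite /frac subr_ge0 floor_le /= ltrBlDl.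
by have := floorD1_gt x; rewrite intrD addrC.
Qed.

Lemma fracB_int (x : rat) : frac x - x \is a Num.int.
Proof. by rewrite /frac addrAC subrr add0r rpredN intr_int. Qed.

Lemma eq_unit_interval_int (a b : rat) :
  0 <= a < 1 -> 0 <= b < 1 -> a - b \is a Num.int -> a = b.
Proof.
move=> /andP[a0 a1] /andP[b0 b1] /intrP[k kE]; apply/eqP; rewrite -subr_eq0 kE.
have : (-1 < k%:~R :> rat) && (k%:~R < 1 :> rat) by rewrite -kE; apply/andP; split; lra.
by rewrite -[-1]/((-1)%:~R : rat) ltr_int ltrz1 intr_eq0; lia.
Qed.

(* Q/Z, each class represented by its element of [0, 1). *)
Record qz := QZ { qz_val : rat; _ : 0 <= qz_val < 1 }.
HB.instance Definition _ := [isSub for qz_val].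
HB.instance Definition _ := [Choice of qz by <:].

Definition qz_of (x : rat) : qz := QZ (frac_bounds x).

Lemma qz_of_eq (x y : rat) : x - y \is a Num.int -> qz_of x = qz_of y.
Proof.
move=> xy; apply: val_inj; apply: eq_unit_interval_int (frac_bounds _) (frac_bounds _) _.
have -> : frac x - frac y = (frac x - x) - (frac y - y) + (x - y) by ring.
exact/rpredD/xy/rpredB/fracB_int/fracB_int.
Qed.

Lemma qz_val_of (x : rat) : 0 <= x < 1 -> qz_val (qz_of x) = x.
Proof. by move=> x01; apply: eq_unit_interval_int (frac_bounds _) x01 (fracB_int _). Qed.

Lemma qz_valK (a : qz) : qz_of (qz_val a) = a.
Proof. by apply: val_inj; case: a => x x01; exact: qz_val_of. Qed.

Definition qz_add (a b : qz) : qz := qz_of (qz_val a + qz_val b).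
Definition qz_opp (a : qz) : qz := qz_of (- qz_val a).

Lemma qz_of_add (x y : rat) : qz_add (qz_of x) (qz_of y) = qz_of (x + y).
Proof.
apply: qz_of_eq.
have -> : frac x + frac y - (x + y) = (frac x - x) + (frac y - y) by ring.
exact/rpredD/fracB_int/fracB_int.
Qed.

Lemma qz_of_opp (x : rat) : qz_opp (qz_of x) = qz_of (- x).
Proof. by apply: qz_of_eq; rewrite -opprD rpredN fracB_int. Qed.

Lemma qz_addA : associative qz_add.
Proof.
by move=> a b c; rewrite -(qz_valK a) -(qz_valK b) -(qz_valK c) !qz_of_add addrA.
Qed.

Lemma qz_addC : commutative qz_add.
Proof. by move=> a b; rewrite /qz_add addrC. Qed.

Lemma qz_add0 : left_id (qz_of 0) qz_add.
Proof. by move=> a; rewrite -(qz_valK a) qz_of_add add0r. Qed.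

Lemma qz_addN : left_inverse (qz_of 0) qz_opp qz_add.
Proof. by move=> a; rewrite -(qz_valK a) qz_of_opp qz_of_add addNr. Qed.

HB.instance Definition _ := GRing.isZmodule.Build qz qz_addA qz_addC qz_add0 qz_addN.

Lemma qz_ofB : {morph qz_of : x y / x - y}.
Proof. by move=> x y; rewrite -[RHS]/(qz_add _ (qz_opp _)) qz_of_opp qz_of_add. Qed.

HB.instance Definition _ := GRing.isZmodMorphism.Build rat qz qz_of qz_ofB.

Lemma qz_divisible : divisible qz.
Proof.
move=> d n n_gt0; exists (qz_of (qz_val d / n%:R)).
by rewrite -raddfMn -(mulr_natr (_ / _)) divfK ?pnatr_eq0 -?lt0n //; exact: qz_valK.
Qed.

Lemma qz_cogenerating : cogenerating qz.
Proof.
move=> n n_neq1; pose m := maxn n 2.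
have m_gt1 : (1 < m)%N by rewrite leq_max orbT.
have m01 : 0 <= (m%:R : rat)^-1 < 1.
  by rewrite invr_ge0 ler0n /= invf_lt1 ?ltr1n // (ltr0n _ m) (ltn_trans _ m_gt1).
exists (qz_of m%:R^-1).
  apply: contraTneq isT => /(congr1 qz_val); rewrite qz_val_of //.
  by move=> /eqP; rewrite invr_eq0 pnatr_eq0 -[m]prednK ?(ltn_trans _ m_gt1).
case: (posnP n) => [->|n_gt0]; first by rewrite mulr0n.
have -> : m = n by rewrite /m; apply/maxn_idPl; rewrite ltn_neqAle eq_sym n_neq1.
rewrite -raddfMn -(mulr_natr (_^-1)) mulVf ?pnatr_eq0 -?lt0n //.
by rewrite -(raddf0 qz_of); apply: qz_of_eq; rewrite subr0 rpred1.
Qed.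

Section Subgroups.
Variable A : zmodType.
Implicit Types (S T : set A) (x y : A).

Definition is_subgroup S := S 0 /\ forall x y, S x -> S y -> S (x - y).

Lemma subgroupN S x : is_subgroup S -> S x -> S (- x).
Proof. by case=> S0 SB Sx; rewrite -sub0r; apply: SB. Qed.

Lemma subgroupD S x y : is_subgroup S -> S x -> S y -> S (x + y).
Proof.
by move=> sS Sx Sy; rewrite -[y]opprK; case: (sS) => _ SB; apply: SB => //; apply: subgroupN.
Qed.

Lemma subgroupMz S x k : is_subgroup S -> S x -> S (x *~ k).
Proof.
move=> sS Sx; have SMn n : S (x *+ n).
  by elim: n => [|n IHn]; [case: sS | rewrite mulrS; apply: subgroupD].
by case: k => n; [apply: SMn | rewrite NegzE mulrNz; apply: subgroupN sS (SMn _)].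
Qed.

Definition addset S T : set A := fun x => exists y z, [/\ S y, T z & x = y + z].

Lemma addset_subgroup S T : is_subgroup S -> is_subgroup T -> is_subgroup (addset S T).
Proof.
move=> [S0 SB] [T0 TB]; split; first by exists 0, 0; rewrite addr0.
move=> _ _ [y [z [Sy Tz ->]]] [y' [z' [Sy' Tz' ->]]].
by exists (y - y'), (z - z'); split; [apply: SB | apply: TB | rewrite opprD addrACA].
Qed.

End Subgroups.

Lemma int_subgroup_dvdz (P : set int) :
  is_subgroup P -> exists n : nat, forall k, P k <-> (n %| k)%Z.
Proof.
move=> sP; have Pdvd (n : nat) k : P n -> (n %| k)%Z -> P k.
  by move=> Pn /divzK <-; rewrite mulrC -mulrzz; apply: subgroupMz.
have [[k [k_neq0 Pk]]|P_0] := pselect (exists k, k != 0 /\ P k); last first.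
  exists 0%N => k; rewrite dvd0z; split => [Pk|/eqP->]; last by case: sP.
  by apply/negPn/negP => k_neq0; apply: P_0; exists k.
have Pabs : P `|k|%N.
  by rewrite abszE; case: (ger0P k) => _ //; apply: subgroupN.
have [|n /andP[n_gt0 /asboolP Pn] n_min] :=
  @ex_minnP (fun n => (0 < n)%N && `[< P n >]).
  by exists `|k|%N; rewrite absz_gt0 k_neq0; apply/asboolP.
exists n => j; split => [Pj|]; last exact: Pdvd.
have n_neq0 : n%:Z != 0 by rewrite eqz_nat -lt0n.
have Pr : P (j %% n)%Z.
  have -> : (j %% n)%Z = j - (j %/ n)%Z * n.
    by rewrite {2}(divz_eq j n) addrAC subrr add0r.
  by case: (sP) => _ PB; apply: PB Pj (Pdvd _ _ Pn (dvdz_mull _ (dvdzz _))).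
apply/dvdz_mod0P; move: (modz_ge0 j n_neq0) (ltz_pmod j (n_gt0 : 0 < n%:Z)) Pr.
case: (j %% n)%Z => // -[//|m] _; rewrite ltz_nat => m_lt Pm.
by have := n_min m.+1; rewrite ltn0Sn /= => /(_ (asboolT Pm)); rewrite leqNgt m_lt.
Qed.

Lemma multiples_subgroup (A : zmodType) (S : set A) (y : A) :
  is_subgroup S -> exists n : nat, forall k, S (y *~ k) <-> (n %| k)%Z.
Proof.
move=> sS; apply: int_subgroup_dvdz; split; first by case: sS; rewrite mulr0z.
by move=> k k' Sk Sk'; rewrite mulrzBr; case: sS => _; apply.
Qed.

Lemma pairMzE (A B : zmodType) (a : A) (b : B) (k : int) :
  (a, b) *~ k = (a *~ k, b *~ k).
Proof. by case: k => n; rewrite ?NegzE ?mulrNz -!pmulrn pairMnE. Qed.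

Section AdditiveMaps.
Variables (A B : zmodType) (f : A -> B).
Hypothesis f_add : {morph f : x y / x + y}.

Lemma addmorph0 : f 0 = 0.
Proof. by apply: (@addrI _ (f 0)); rewrite -f_add !addr0. Qed.

Lemma addmorphN : {morph f : x / - x}.
Proof. by move=> x; apply: (@addrI _ (f x)); rewrite -f_add !subrr addmorph0. Qed.

Lemma addmorphB : {morph f : x y / x - y}.
Proof. by move=> x y; rewrite f_add addmorphN. Qed.

End AdditiveMaps.

Section AdditiveExtension.
Variables (M D : zmodType).
Implicit Types (G H : set (M * D)) (x y : M) (c d : D).

Definition single_valued G := forall x d d', G (x, d) -> G (x, d') -> d = d'.

(* Additive maps defined on a subgroup of [M] are encoded by their graphs. *)
Definition hom_graph G := is_subgroup G /\ single_valued G.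

Lemma hom_graphP G : is_subgroup G -> (forall d, G (0, d) -> d = 0) -> hom_graph G.
Proof.
move=> sG G0; split=> // x d d' Gd Gd'; apply/eqP; rewrite -subr_eq0; apply/eqP.
by apply: G0; case: sG => _ /(_ _ _ Gd Gd'); rewrite -[_ - _]/(x - x, d - d') subrr.
Qed.

Definition adjoin G y c : set (M * D) :=
  fun p => exists2 q, G q & exists k : int, p = q + (y, c) *~ k.

Lemma adjoin_hom_graph G y c : hom_graph G ->
  (forall k d, G (y *~ k, d) -> d = c *~ k) -> hom_graph (adjoin G y c).
Proof.
move=> [sG _] Gyc; apply: hom_graphP.
  split; first by exists 0; [case: sG | exists 0; rewrite mulr0z addr0].
  move=> _ _ [q Gq [k ->]] [q' Gq' [k' ->]]; exists (q - q'); first by case: sG => _; apply.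
  by exists (k - k'); rewrite mulrzBr opprD addrACA.
move=> d [[x e] Gq [k]]; rewrite pairMzE => -[x0 d0].
have x_eq : x = y *~ (- k) by rewrite mulrNz; apply/eqP; rewrite -addr_eq0 -x0.
have := Gyc _ _ (eq_ind _ (fun z => G (z, e)) Gq _ x_eq).
by rewrite d0 mulrNz => ->; rewrite addNr.
Qed.

Lemma sub_adjoin G y c : is_subgroup G -> G `<=` adjoin G y c.
Proof. by move=> _ p Gp; exists p => //; exists 0; rewrite mulr0z addr0. Qed.

Lemma adjoin_gen G y c : is_subgroup G -> adjoin G y c (y, c).
Proof. by case=> G0 _; exists 0 => //; exists 1; rewrite mulr1z add0r. Qed.

Lemma hom_graph_chain (A : set (set (M * D))) :
  (forall H, A H -> hom_graph H) ->
  (forall H H', A H -> A H' -> H `<=` H' \/ H' `<=` H) ->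
  (exists H, A H) -> hom_graph (\bigcup_(H in A) H).
Proof.
move=> hA chainA [H0 AH0].
have common p p' : (\bigcup_(H in A) H) p -> (\bigcup_(H in A) H) p' ->
    exists2 H, A H & H p /\ H p'.
  move=> [H AH Hp] [H' AH' H'p'].
  case: (chainA _ _ AH AH') => [HH'|H'H].
    by exists H' => //; split => //; apply: HH'.
  by exists H => //; split => //; apply: H'H.
split; first split.
- by exists H0 => //; have [[]] := hA _ AH0.
- move=> p p' /common /[apply] -[H AH [Hp Hp']]; exists H => //.
  by have [[_ HB] _] := hA _ AH; apply: HB.
- move=> x d d' /common /[apply] -[H AH [Hd Hd']].
  by have [_ Hsv] := hA _ AH; apply: Hsv Hd Hd'.
Qed.

Hypothesis D_divisible : divisible D.

Lemma hom_graph_value G y : hom_graph G ->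
  exists c, forall k d, G (y *~ k, d) -> d = c *~ k.
Proof.
move=> [sG svG].
have sdom : is_subgroup (fun x => exists d, G (x, d)).
  split; first by exists 0; case: sG.
  by move=> x x' [d Gd] [d' Gd']; exists (d - d'); case: sG => _ /(_ _ _ Gd Gd').
have [n dvd_n] := multiples_subgroup y sdom.
have [n0|n_gt0] := posnP n.
  exists 0 => k d Gd; rewrite mul0rz.
  have /dvd_n : exists d, G (y *~ k, d) by exists d.
  rewrite n0 dvd0z => /eqP k0; move: Gd; rewrite k0 mulr0z => G0d.
  by apply: svG G0d _; case: sG.
have [dn Gdn] := (dvd_n n).2 (dvdzz n).
have [c cn] := D_divisible dn n_gt0.
exists c => k d Gd.
have /(dvd_n k).1 /divzK kE : exists d, G (y *~ k, d) by exists d.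
have := subgroupMz (k %/ n)%Z sG Gdn.
rewrite pairMzE -mulrzA -cn pmulrn -mulrzA mulrC kE => Gk.
exact: svG Gd Gk.
Qed.

Theorem hom_graph_extend G : hom_graph G ->
  exists f : M -> D, {morph f : x y / x + y} /\ forall x d, G (x, d) -> f x = d.
Proof.
move=> hG; pose T := {H | hom_graph H /\ G `<=` H}.
pose le (a b : T) := `[< sval a `<=` sval b >].
pose t0 : T := exist _ G (conj hG (@subset_refl _ G)).
have [[H [hH GH]] Hmax] : exists t : T, premaximal le t.
  apply: (ZL_preorder t0) => [a|a b c /asboolP ab /asboolP bc|A chainA].
  - exact/asboolP.
  - by apply/asboolP; apply: subset_trans ab bc.
  have [[a0 Aa0]|A0] := pselect (exists a, A a); last first.
    by exists t0 => a Aa; exfalso; apply: A0; exists a.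
  pose U := \bigcup_(H in [set sval a | a in A]) H.
  have hU : hom_graph U.
    apply: hom_graph_chain; last by exists (sval a0); exists a0.
    - by move=> _ [a _ <-]; case: (svalP a).
    - move=> _ _ [a Aa <-] [b Ab <-].
      by case: (chainA _ _ Aa Ab) => /asboolP; [left | right].
  have GU : G `<=` U.
    by move=> p Gp; exists (sval a0); [exists a0 | case: (svalP a0) => _; apply].
  exists (exist _ U (conj hU GU)) => a Aa; apply/asboolP => p ap.
  by exists (sval a) => //; exists a.
have dom x : exists d, H (x, d).
  have [c Hc] := hom_graph_value x hH.
  have HH' := sub_adjoin x c hH.1.
  have hH' := adjoin_hom_graph hH Hc.
  have /asboolP H'H := Hmax (exist _ _ (conj hH' (subset_trans GH HH'))) (asboolT HH').
  by exists c; apply: H'H; apply: adjoin_gen hH.1.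
exists (fun x => projT1 (cid (dom x))); split => [x y|x d Gd].
  case: (cid (dom x)) => d Hd; case: (cid (dom y)) => d' Hd'.
  case: (cid (dom (x + y))) => e He /=.
  by apply: hH.2 He _; apply: subgroupD hH.1 Hd Hd'.
by case: (cid (dom x)) => e He /=; apply: hH.2 He (GH _ Gd).
Qed.

Lemma character_on_sum (X Y : set M) (f : M -> D) :
  is_subgroup X -> is_subgroup Y -> {morph f : a b / a + b} ->
  (forall z, X z -> Y z -> f z = 0) ->
  exists g : M -> D, [/\ {morph g : a b / a + b},
                         forall x, X x -> g x = f x & forall y, Y y -> g y = 0].
Proof.
move=> sX sY f_add fXY.
pose G : set (M * D) := fun p => exists x y, [/\ X x, Y y & p = (x + y, f x)].
have hG : hom_graph G.
  apply: hom_graphP.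
    split.
      by exists 0, 0; split; [case: sX | case: sY | rewrite addr0 (addmorph0 f_add)].
    move=> _ _ [x [y [Xx Yy ->]]] [x' [y' [Xx' Yy' ->]]].
    exists (x - x'), (y - y'); split; [by case: sX => _; apply | by case: sY => _; apply |].
    by rewrite (addmorphB f_add) -[LHS]/(x + y - (x' + y'), f x - f x') opprD addrACA.
  move=> d [x [y [Xx Yy [xy ->]]]].
  have xE : x = - y by apply/eqP; rewrite -addr_eq0 -xy.
  by apply: fXY; rewrite // xE; apply: subgroupN.
have [g [g_add gG]] := hom_graph_extend hG.
exists g; split => // [x Xx|y Yy]; apply: gG.
  by exists x, 0; split => //; [case: sY | rewrite addr0].
by exists 0, y; split => //; [case: sX | rewrite add0r (addmorph0 f_add)].
Qed.

Hypothesis D_cogenerating : cogenerating D.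

Lemma separating_character (X : set M) y : is_subgroup X -> ~ X y ->
  exists f : M -> D, [/\ {morph f : a b / a + b}, forall x, X x -> f x = 0 & f y != 0].
Proof.
move=> sX Xy; have [n dvd_n] := multiples_subgroup y sX.
have [c c_neq0 cn] : exists2 c : D, c != 0 & c *+ n = 0.
  apply: D_cogenerating; apply/eqP => n1; apply: Xy.
  by rewrite -[y]mulr1z; apply/dvd_n; rewrite n1 dvd1z.
pose G : set (M * D) := fun p => X p.1 /\ p.2 = 0.
have hG : hom_graph G.
  apply: hom_graphP => [|d [_ //]]; split; first by split => //; case: sX.
  by move=> p q [Xp p0] [Xq q0]; split; [case: sX => _; apply | rewrite /= p0 q0 subrr].
have Gyc k d : G (y *~ k, d) -> d = c *~ k.
  by move=> [/dvd_n /divzK <- /= ->]; rewrite mulrC mulrzA -pmulrn cn mul0rz.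
have [f [f_add f_ext]] := hom_graph_extend (adjoin_hom_graph hG Gyc).
exists f; split => // [x Xx|]; first by apply: f_ext; apply: sub_adjoin hG.1 _ _.
by rewrite (f_ext _ _ (adjoin_gen _ _ hG.1)).
Qed.

End AdditiveExtension.

Fixpoint sum_eval (A : zmodType) (e : nat -> set A) (t : lterm) : set A :=
  match t with
  | LVar i => e i
  | LJoin p q => addset (sum_eval e p) (sum_eval e q)
  | LMeet p q => sum_eval e p `&` sum_eval e q
  end.

Lemma sub_eval_sum_eval (R : pzRingType) (M : lmodType R) (e : nat -> set M) t :
  sub_eval e t = sum_eval e t.
Proof. by elim: t => //= p -> q ->. Qed.

Lemma sum_eval_subgroup (A : zmodType) (e : nat -> set A) t :
  (forall i, is_subgroup (e i)) -> is_subgroup (sum_eval e t).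
Proof.
move=> se; elim: t => [i|p sp q sq|p [p0 pB] q [q0 qB]] /=; first exact: se.
  exact: addset_subgroup.
by split=> // x y [px qx] [py qy]; split; [apply: pB | apply: qB].
Qed.

Lemma sum_eval_morph (A B : zmodType) (h : A -> B) (e1 : nat -> set A) (e2 : nat -> set B) :
  {morph h : x y / x + y} -> (forall i v, e1 i v -> e2 i (h v)) ->
  forall t v, sum_eval e1 t v -> sum_eval e2 t (h v).
Proof.
move=> h_add he; elim=> [i|p IHp q IHq|p IHp q IHq] v /=; first exact: he.
  by move=> [y [z [py qz ->]]]; exists (h y), (h z); split; [apply: IHp | apply: IHq |].
by move=> [pv qv]; split; [apply: IHp | apply: IHq].
Qed.

Section Annihilators.
Variables (M D : zmodType).
Hypothesis D_divisible : divisible D.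

(* [M -> D] carries the pointwise group structure from [functions]. *)
Definition annihilator (C : set M) : set (M -> D) :=
  fun f => {morph f : x y / x + y} /\ forall m, C m -> f m = 0.

Theorem sum_eval_annihilator (e : nat -> set M) t f :
  (forall i, is_subgroup (e i)) ->
  sum_eval (fun i => annihilator (e i)) t f <-> annihilator (sum_eval e (ldual t)) f.
Proof.
move=> se; elim: t f => [i|p IHp q IHq|p IHp q IHq] f //=.
- split=> [[g [h [/IHp [g_add g0] /IHq [h_add h0] ->]]]|[f_add f0]].
    split=> [x y|m [pm qm]]; last by rewrite !fctE /= g0 // h0 // addr0.
    by rewrite !fctE /= g_add h_add addrACA.
  have [g [g_add gf g0]] := character_on_sum D_divisible
    (sum_eval_subgroup _ se) (sum_eval_subgroup _ se) f_add (fun z pz qz => f0 z (conj pz qz)).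
  exists (f - g), g; split; last by rewrite subrK.
  + apply/IHp; split=> [x y|m pm]; last by rewrite !fctE /= gf // subrr.
    by rewrite !fctE /= f_add g_add opprD addrACA.
  + exact/IHq.
- have [[p0 _] [q0 _]] := (sum_eval_subgroup (ldual p) se, sum_eval_subgroup (ldual q) se).
  split=> [[/IHp [f_add fp] /IHq [_ fq]]|[f_add f0]].
    by split=> // _ [y [z [py qz ->]]]; rewrite f_add fp // fq // addr0.
  split; [apply/IHp | apply/IHq]; split=> // m em; apply: f0.
    by exists m, 0; rewrite addr0.
  by exists 0, m; rewrite add0r.
Qed.

End Annihilators.

Section Submodules.
Variables (R : pzRingType) (V : lmodType R).
Implicit Types S T : set V.

Lemma submodule_subgroup S : is_submodule S -> is_subgroup S.
Proof. by case=> S0 SD SZ; split=> // x y Sx Sy; rewrite -scaleN1r; apply/SD/SZ. Qed.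

Lemma addset_submodule S T : is_submodule S -> is_submodule T -> is_submodule (addset S T).
Proof.
move=> [S0 SD SZ] [T0 TD TZ]; split; first by exists 0, 0; rewrite addr0.
  move=> _ _ [y [z [Sy Tz ->]]] [y' [z' [Sy' Tz' ->]]].
  by exists (y + y'), (z + z'); split; [apply: SD | apply: TD | rewrite addrACA].
move=> a _ [y [z [Sy Tz ->]]].
by exists (a *: y), (a *: z); split; [apply: SZ | apply: TZ | rewrite scalerDr].
Qed.

Lemma line_submodule (w : V) : is_submodule (fun v => exists r, v = r *: w).
Proof.
split; first by exists 0; rewrite scale0r.
  by move=> _ _ [r ->] [s ->]; exists (r + s); rewrite scalerDl.
by move=> a _ [r ->]; exists (a * r); rewrite scalerA.
Qed.

Lemma set0_submodule : is_submodule [set 0 : V].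
Proof. by split=> // [x y -> ->|a x ->]; rewrite ?addr0 ?scaler0. Qed.

End Submodules.

Fixpoint nleaves (t : lterm) : nat :=
  match t with
  | LVar _ => 1
  | LJoin p q | LMeet p q => nleaves p + nleaves q
  end.

Section FreeModel.
Context {R : pzRingType}.
Local Notation vec n := 'rV[R]_n.
Local Unset Implicit Arguments.

Definition split_set {m n} (S : set (vec m)) (T : set (vec n)) : set (vec (m + n)) :=
  fun v => S (lsubmx v) /\ T (rsubmx v).

Lemma split_set_submodule {m n} (S : set (vec m)) (T : set (vec n)) :
  is_submodule S -> is_submodule T -> is_submodule (split_set S T).
Proof.
move=> [S0 SD SZ] [T0 TD TZ]; split; first by rewrite /split_set !linear0.
  by move=> x y [Sx Tx] [Sy Ty]; rewrite /split_set !linearD; split; [apply: SD | apply: TD].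
by move=> a x [Sx Tx]; rewrite /split_set !linearZ; split; [apply: SZ | apply: TZ].
Qed.

Lemma split_set_row_mx {m n} (S : set (vec m)) (T : set (vec n)) a b :
  split_set S T (row_mx a b) = (S a /\ T b).
Proof. by rewrite /split_set row_mxKl row_mxKr. Qed.

(* Coordinates of the free model of [t] are the leaf occurrences of [t]. *)
Fixpoint gen_vec t : vec (nleaves t) :=
  match t with
  | LVar _ => const_mx 1
  | LJoin p q => row_mx (gen_vec p) (gen_vec q)
  | LMeet p q => row_mx (gen_vec p) 0
  end.

Fixpoint leaf_span t i : set (vec (nleaves t)) :=
  match t with
  | LVar j => if j == i then setT else [set 0]
  | LJoin p q | LMeet p q => split_set (leaf_span p i) (leaf_span q i)
  end.

(* At a meet, the generic vectors of both arguments are identified. *)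
Fixpoint meet_rel t : set (vec (nleaves t)) :=
  match t with
  | LVar _ => [set 0]
  | LJoin p q => split_set (meet_rel p) (meet_rel q)
  | LMeet p q => addset (split_set (meet_rel p) (meet_rel q))
                        (fun v => exists r, v = r *: row_mx (gen_vec p) (- gen_vec q))
  end.

Definition free_var t i := addset (leaf_span t i) (meet_rel t).

Lemma leaf_span_submodule t i : is_submodule (leaf_span t i).
Proof.
elim: t => [j|p sp q sq|p sp q sq] /=; try exact: split_set_submodule.
by case: eqP => _; [split | exact: set0_submodule].
Qed.

Lemma meet_rel_submodule t : is_submodule (meet_rel t).
Proof.
elim: t => [j|p sp q sq|p sp q sq] /=; first exact: set0_submodule.
  exact: split_set_submodule.
exact/addset_submodule/line_submodule/split_set_submodule.
Qed.

Lemma free_var_submodule t i : is_submodule (free_var t i).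
Proof. exact/addset_submodule/meet_rel_submodule/leaf_span_submodule. Qed.

Lemma free_var_join p q i a b :
  free_var p i a -> free_var q i b -> free_var (LJoin p q) i (row_mx a b).
Proof.
move=> [a1 [a2 [la ka ->]]] [b1 [b2 [lb kb ->]]].
by exists (row_mx a1 b1), (row_mx a2 b2); rewrite add_row_mx /= !split_set_row_mx.
Qed.

Lemma free_var_meet p q i a b :
  free_var p i a -> free_var q i b -> free_var (LMeet p q) i (row_mx a b).
Proof.
move=> [a1 [a2 [la ka ->]]] [b1 [b2 [lb kb ->]]].
exists (row_mx a1 b1), (row_mx a2 b2); rewrite add_row_mx /= !split_set_row_mx.
split=> //; exists (row_mx a2 b2), 0; rewrite addr0 split_set_row_mx.
by split=> //; exists 0; rewrite scale0r.
Qed.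

Lemma sum_eval_add_meet_rel t s v k :
  sum_eval (free_var t) s v -> meet_rel t k -> sum_eval (free_var t) s (v + k).
Proof.
have [_ kD _] := meet_rel_submodule t.
elim: s v => [i|p IHp q IHq|p IHp q IHq] v /=.
- by move=> [a [b [la kb ->]]] kk; exists a, (b + k); rewrite addrA; split=> //; apply: kD.
- by move=> [y [z [py qz ->]]] kk; exists y, (z + k); rewrite addrA; split=> //; apply: IHq.
- by move=> [pv qv] kk; split; [apply: IHp | apply: IHq].
Qed.

Lemma sum_eval_row_mxl {m n} (e : nat -> set (vec m)) (e' : nat -> set (vec (m + n))) s a :
  (forall i a, e i a -> e' i (row_mx a 0)) -> sum_eval e s a -> sum_eval e' s (row_mx a 0).
Proof. by move=> he; apply: (sum_eval_morph _ he) => x y; rewrite add_row_mx addr0. Qed.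

Lemma sum_eval_row_mxr {m n} (e : nat -> set (vec n)) (e' : nat -> set (vec (m + n))) s a :
  (forall i a, e i a -> e' i (row_mx 0 a)) -> sum_eval e s a -> sum_eval e' s (row_mx 0 a).
Proof. by move=> he; apply: (sum_eval_morph _ he) => x y; rewrite add_row_mx addr0. Qed.

Lemma gen_vec_eval t : sum_eval (free_var t) t (gen_vec t).
Proof.
have var0 s i : free_var s i 0 by case: (free_var_submodule s i).
elim: t => [j|p IHp q IHq|p IHp q IHq] /=.
- by exists (const_mx 1), 0; rewrite /= eqxx addr0.
- exists (row_mx (gen_vec p) 0), (row_mx 0 (gen_vec q)).
  split; last by rewrite add_row_mx addr0 add0r.
    by apply: sum_eval_row_mxl IHp => i a fa; apply: free_var_join fa (var0 _ _).
  by apply: sum_eval_row_mxr IHq => i a fa; apply: free_var_join (var0 _ _) fa.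
split; first by apply: sum_eval_row_mxl IHp => i a fa; apply: free_var_meet fa (var0 _ _).
rewrite -[row_mx _ 0](subrK (row_mx 0 (gen_vec q))) addrC.
apply: (sum_eval_add_meet_rel (LMeet p q)).
  by apply: sum_eval_row_mxr IHq => i a fa; apply: free_var_meet (var0 _ _) fa.
exists 0, (row_mx (gen_vec p) (- gen_vec q)); split.
- by case: (split_set_submodule _ _ (meet_rel_submodule p) (meet_rel_submodule q)).
- by exists 1; rewrite scale1r.
- by rewrite add0r opp_row_mx add_row_mx oppr0 addr0 add0r.
Qed.

End FreeModel.

Section CharacterAction.
Variables (R : pzRingType) (M : lmodType R) (D : zmodType).
Implicit Types (C : set M) (f : M -> D).

Lemma annihilator_subgroup C : is_subgroup (@annihilator _ D C).
Proof.
split; first by split=> [x y|m _]; rewrite /= ?addr0.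
move=> f g [f_add f0] [g_add g0]; split=> [x y|m Cm]; rewrite !fctE /=.
  by rewrite f_add g_add opprD addrACA.
by rewrite f0 // g0 // subrr.
Qed.

Lemma annihilator_act C f r :
  is_submodule C -> annihilator C f -> annihilator C (fun m => f (r *: m)).
Proof.
move=> [_ _ CZ] [f_add f0]; split=> [x y|m Cm]; first by rewrite scalerDr f_add.
by rewrite f0 //; apply: CZ.
Qed.

(* The clause on [r *: gen_vec t] is the invariant that the induction needs at meets. *)
Lemma free_model_map (e : nat -> set M) t f :
  (forall i, is_submodule (e i)) -> sum_eval (fun i => annihilator (e i)) t f ->
  exists h : 'rV[R]_(nleaves t) -> (M -> D),
  [/\ {morph h : u v / u + v}, forall r, h (r *: gen_vec t) = (fun m => f (r *: m)),
      forall i v, leaf_span t i v -> annihilator (e i) (h v)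
    & forall v, meet_rel t v -> h v = 0].
Proof.
move=> se; elim: t f => [j|p IHp q IHq|p IHp q IHq] f /=.
- move=> fj; have [f_add _] := fj.
  exists (fun v m => f (v 0 0 *: m)); split.
  + by move=> u v; apply/funext => m; rewrite /= mxE scalerDl f_add.
  + by move=> r; apply/funext => m; rewrite !mxE mulr1.
  + move=> i v; case: eqP => [<- _|_ ->]; first exact: annihilator_act.
    have -> : (fun m => f ((0 : 'rV_1) 0 0 *: m)) = 0.
      by apply/funext => m; rewrite mxE scale0r (addmorph0 f_add).
    by case: (annihilator_subgroup (e i)).
  + by move=> v ->; apply/funext => m; rewrite mxE scale0r (addmorph0 f_add).
- move=> [g1 [g2 [/IHp [h1 [h1_add h1_gen h1_leaf h1_rel]]
                 /IHq [h2 [h2_add h2_gen h2_leaf h2_rel]] ->]]].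
  exists (fun v => h1 (lsubmx v) + h2 (rsubmx v)); split.
  + by move=> u v; rewrite !linearD h1_add h2_add addrACA.
  + by move=> r; rewrite scale_row_mx row_mxKl row_mxKr h1_gen h2_gen.
  + move=> i v [l1 l2].
    exact: subgroupD (annihilator_subgroup (e i)) (h1_leaf _ _ l1) (h2_leaf _ _ l2).
  + by move=> v [k1 k2]; rewrite h1_rel // h2_rel // addr0.
move=> [/IHp [h1 [h1_add h1_gen h1_leaf h1_rel]] /IHq [h2 [h2_add h2_gen h2_leaf h2_rel]]].
exists (fun v => h1 (lsubmx v) + h2 (rsubmx v)); split.
- by move=> u v; rewrite !linearD h1_add h2_add addrACA.
- by move=> r; rewrite scale_row_mx scaler0 row_mxKl row_mxKr h1_gen (addmorph0 h2_add) addr0.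
- move=> i v [l1 l2].
  exact: subgroupD (annihilator_subgroup (e i)) (h1_leaf _ _ l1) (h2_leaf _ _ l2).
move=> _ [k [w [[k1 k2] [r ->] ->]]].
rewrite -(hsubmxK k) scale_row_mx add_row_mx row_mxKl row_mxKr h1_add h2_add.
by rewrite h1_rel // h2_rel // !add0r scalerN (addmorphN h2_add) h1_gen h2_gen subrr.
Qed.

End CharacterAction.

Definition incl_in_all_Sub (R : pzRingType) (p q : lterm) :=
  forall (M : lmodType R) (e : nat -> set M), (forall i, is_submodule (e i)) ->
    sub_eval e p `<=` sub_eval e q.

Lemma incl_in_all_Sub_annihilator (R : pzRingType) (p q : lterm) (M : lmodType R)
    (D : zmodType) (e : nat -> set M) :
  incl_in_all_Sub R p q -> (forall i, is_submodule (e i)) ->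
  sum_eval (fun i => @annihilator _ D (e i)) p `<=` sum_eval (fun i => annihilator (e i)) q.
Proof.
move=> pq se f fp; have [h [h_add h_gen h_leaf h_rel]] := free_model_map se fp.
have h_var i v : free_var p i v -> annihilator (e i) (h v).
  by move=> [a [b [la kb ->]]]; rewrite h_add (h_rel b kb) addr0; apply: h_leaf.
have <- : h (gen_vec p) = f.
  by rewrite -[gen_vec p]scale1r h_gen; apply/funext => m; rewrite scale1r.
apply: (sum_eval_morph (e2 := fun i => annihilator (e i)) h_add h_var).
rewrite -sub_eval_sum_eval; apply: (pq _ _ (free_var_submodule p)).
by rewrite sub_eval_sum_eval; apply: gen_vec_eval.
Qed.

Lemma incl_in_all_Sub_dual (R : pzRingType) (p q : lterm) :
  incl_in_all_Sub R p q -> incl_in_all_Sub R (ldual q) (ldual p).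
Proof.
move=> pq M e se x; rewrite !sub_eval_sum_eval => qx; apply: contrapT => px.
have sg i := submodule_subgroup (se i).
have [f [f_add f0 fx]] :=
  separating_character qz_divisible qz_cogenerating (sum_eval_subgroup _ sg) px.
have /(sum_eval_annihilator qz_divisible _ _ sg) fp : annihilator (sum_eval e (ldual p)) f.
  by [].
have /(sum_eval_annihilator qz_divisible _ _ sg) [_ fq] :=
  incl_in_all_Sub_annihilator pq se fp.
by rewrite fq ?eqxx in fx.
Qed.

Lemma ldualK : involutive ldual.
Proof. by elim=> //= p -> q ->. Qed.

Lemma incl_in_all_Sub_dualE (R : pzRingType) (p q : lterm) :
  incl_in_all_Sub R (ldual p) (ldual q) <-> incl_in_all_Sub R q p.
Proof.
split; last exact: incl_in_all_Sub_dual.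
by rewrite -{2}[p]ldualK -{2}[q]ldualK; apply: incl_in_all_Sub_dual.
Qed.

Lemma holds_in_all_SubE (R : pzRingType) (p q : lterm) :
  (forall M : lmodType R, holds_in_Sub M (p, q)) <->
  incl_in_all_Sub R p q /\ incl_in_all_Sub R q p.
Proof.
split=> [pq|[pq qp] M e se x]; last by split; [apply: pq | apply: qp].
by split=> M e se x /(pq M e se x).
Qed.

Theorem theorem5p1 (R : pzRingType) (l : lidentity) :
  (forall M : lmodType R, holds_in_Sub M l) <->
  (forall M : lmodType R, holds_in_Sub M (lidentity_dual l)).
Proof.
case: l => p q; rewrite /lidentity_dual !holds_in_all_SubE /= !incl_in_all_Sub_dualE.
by split=> -[].
Qed.
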